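(* Let $H$ be a last-use opaque history (with unique writes) produced by some program. Then there are no transactions $T_i,T_j\in H$ such that (a) $T_i$ releases some variable $x$ early in $H$, (b) $H|T_i$ contains write executions $w_i(x,v)\to ok_i$ and $w_i(x,v')\to ok_i$ with the former preceding the latter in $H|T_i$, and (c) $H|T_j$ contains a read execution $r_j(x)\to v$ that precedes $w_i(x,v')\to ok_i$ in $H$. That is, last-use opacity does not support overwriting.
   Context: Standard TM model: transactions $T_i$ with operations $\mathit{init}_i$, $\mathit{read}_i(x)$, $\mathit{write}_i(x,v)$, $\mathit{tryC}_i$, $\mathit{tryA}_i$ (each an invocation/response; responses $ok_i$, values, $C_i$, or abort $A_i$); well-formed histories with unique writes; variables with domain $\mathbb{N}_0$, initial value $0$. Committed/aborted/commit-pending/live, completion (live transactions become aborted, commit-pending ones may commit), equivalence (same per-transaction subhistories), real-time order $\prec_H$, sequential histories as usual. $\mathit{Seq}(x)$: sequences of operation executions on $x$ in which each read returning a value returns the latest preceding written value (or $0$); sequential $S'$ legal iff $S'|x\in\mathit{Seq}(x)$ for all $x$. $\mathrm{vis}(S,T_i)$: subhistory of $S$ consisting of $S|T_j$ for $j=i$ or $T_j$ committed with $T_j\prec_S T_i$; legal transaction: $\mathrm{vis}$ legal. Early release: $T_i$ releases $x$ early in $H$ iff some prefix $P$ of $H$ has $T_i$ live and some $T_j$ with a complete read $r_j(x)\to v$ not preceded in $P|T_j$ by a write on $x$, preceded in $P$ by a write $w_i(x,v)$ of $T_i$. Last-use opacity (relative to the program $\mathcal{P}$ and processes $\Pi$ producing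 $H$; $\mathcal{H}(\mathcal{P},\Pi)$ = all producible histories): an invocation of $\mathit{write}_i(x,v)$ is the last write invocation on $x$ by $T_i$ in $H$ if no $H'\in\mathcal{H}(\mathcal{P},\Pi)$ extending $H$ contains a later invocation of $\mathit{write}_i(x,u)$ in $H'|T_i$; a last write is its complete execution with response $\neq A_i$; $T_i$ is decided on $x$ if $H|T_i$ contains such a last write $w_i(x,v)\to ok_i$. $S\Downarrow_C T_j$: $T_j$'s $\mathit{init}_j$ and its operations on variables it is decided on in $H$, followed by $\mathit{tryC}_j\to C_j$. For sequential $S$ equivalent to a completion of $H$, a last-use view of $T_i$ contains $S|T_j$ when $j=i$ or $T_j$ is committed with $T_j\prec_S T_i$; when $T_j$ is not committed in $S$, decided on some variable, $T_j\prec_S T_i$ and not $T_j\prec_H T_i$, it contains either $S\Downarrow_C T_j$ or nothing of $T_j$; otherwise nothing of $T_j$. $T_i$ is last-use legal in $S$ iff some last-use view is legal. Finite $H$ is final-state last-use opaque iff some sequential $S$ equivalent to a completion of $H$ preserves $\prec_H$, with committed transactions legal and others last-use legal; $H$ is last-use opaque iff every finite prefix is final-state last-use opaque. *)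

From Stdlib Require Import List Arith PeanoNat.
Import ListNotations.

(* Transaction identifiers, variables and values are natural numbers;
   the value domain is N_0 with initial value 0. *)
Definition tx := nat.
Definition var := nat.
Definition val := nat.

Inductive Inv : Type :=
| InvInit
| InvRead  (x : var)
| InvWrite (x : var) (v : val)
| InvTryC
| InvTryA.

Inductive Resp : Type :=
| RespOk
| RespVal (v : val)
| RespC
| RespA.

Inductive Event : Type :=
| EvInv  (i : tx) (o : Inv)
| EvResp (i : tx) (r : Resp).

Definition tid (e : Event) : tx :=
  match e with EvInv i _ => i | EvResp i _ => i end.

Definition history := list Event.

Definition proj (H : history) (i : tx) : history :=
  filter (fun e => Nat.eqb (tid e) i) H.

Fixpoint tids (H : history) : list tx :=
  match H with
  | [] => []
  | e :: H' => tid e :: remove Nat.eq_dec (tid e) (tids H')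
  end.

Definition prefix (P H : history) : Prop := exists s, H = P ++ s.

Definition matches (o : Inv) (r : Resp) : Prop :=
  r = RespA \/
  match o with
  | InvInit => r = RespOk
  | InvRead _ => exists v, r = RespVal v
  | InvWrite _ _ => r = RespOk
  | InvTryC => r = RespC
  | InvTryA => False
  end.

Definition terminal (r : Resp) : Prop := r = RespC \/ r = RespA.

Inductive wf_alt (i : tx) : history -> Prop :=
| wf_nil : wf_alt i []
| wf_pending o : wf_alt i [EvInv i o]
| wf_step o r h : matches o r -> ~ terminal r -> wf_alt i h ->
    wf_alt i (EvInv i o :: EvResp i r :: h)
| wf_term o r : matches o r -> terminal r ->
    wf_alt i [EvInv i o; EvResp i r].

Definition wf_tx (i : tx) (h : history) : Prop :=
  h = [] \/
  exists t, h = EvInv i InvInit :: t /\ wf_alt i h /\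
            ~ In (EvInv i InvInit) t.

Definition well_formed (H : history) : Prop := forall i, wf_tx i (proj H i).

Definition unique_writes (H : history) : Prop :=
  (forall p q i j x v,
      nth_error H p = Some (EvInv i (InvWrite x v)) ->
      nth_error H q = Some (EvInv j (InvWrite x v)) -> p = q) /\
  (forall p i x v, nth_error H p = Some (EvInv i (InvWrite x v)) -> v <> 0).

Definition exec (H : history) (p q : nat) (i : tx) (o : Inv) (r : Resp) : Prop :=
  nth_error H p = Some (EvInv i o) /\ p < q /\
  nth_error H q = Some (EvResp i r) /\
  (forall k e, p < k -> k < q -> nth_error H k = Some e -> tid e <> i).

Definition committed (H : history) (i : tx) : Prop := In (EvResp i RespC) H.
Definition aborted (H : history) (i : tx) : Prop := In (EvResp i RespA) H.
Definition completed (H : history) (i : tx) : Prop := committed H i \/ aborted H i.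
Definition live (H : history) (i : tx) : Prop := ~ completed H i.

Definition prec (H : history) (j i : tx) : Prop :=
  completed H j /\ In i (tids H) /\
  forall p q e1 e2, nth_error H p = Some e1 -> tid e1 = j ->
                    nth_error H q = Some e2 -> tid e2 = i -> p < q.

Definition compl_suffix (k : tx) (h e : history) : Prop :=
  match rev h with
  | [] => e = []
  | EvResp _ RespC :: _ => e = []
  | EvResp _ RespA :: _ => e = []
  | EvInv _ InvTryC :: _ => e = [EvResp k RespA] \/ e = [EvResp k RespC]
  | EvInv _ _ :: _ => e = [EvResp k RespA]
  | EvResp _ _ :: _ => e = [EvInv k InvTryA; EvResp k RespA]
  end.

Definition completion (H C : history) : Prop :=
  exists E, C = H ++ E /\ forall k, compl_suffix k (proj H k) (proj E k).

Definition equivalent (H1 H2 : history) : Prop :=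
  forall k, proj H1 k = proj H2 k.

Definition sequential (S : history) : Prop :=
  forall p q r ep eq er, p < q -> q < r ->
    nth_error S p = Some ep -> nth_error S q = Some eq ->
    nth_error S r = Some er -> tid ep = tid er -> tid eq = tid ep.

Definition op_var (o : Inv) : option var :=
  match o with InvRead x => Some x | InvWrite x _ => Some x | _ => None end.

Fixpoint next_resp (i : tx) (s : history) : option Resp :=
  match s with
  | [] => None
  | EvInv k _ :: s' => if Nat.eqb k i then None else next_resp i s'
  | EvResp k r :: s' => if Nat.eqb k i then Some r else next_resp i s'
  end.

Fixpoint op_execs (s : history) : list (Inv * option Resp) :=
  match s with
  | [] => []
  | EvInv i o :: s' => (o, next_resp i s') :: op_execs s'
  | EvResp _ _ :: s' => op_execs s'
  end.

Definition restrict_var (x : var) (s : history) : list (Inv * option Resp) :=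
  filter (fun oe => match op_var (fst oe) with
                    | Some y => Nat.eqb y x
                    | None => false end) (op_execs s).

Fixpoint seq_ok (cur : val) (l : list (Inv * option Resp)) : Prop :=
  match l with
  | [] => True
  | (InvRead _, Some (RespVal u)) :: l' => u = cur /\ seq_ok cur l'
  | (InvWrite _ u, Some RespOk) :: l' => seq_ok u l'
  | _ :: l' => seq_ok cur l'
  end.

Definition in_Seq (l : list (Inv * option Resp)) : Prop := seq_ok 0 l.

Definition legal (s : history) : Prop := forall x, in_Seq (restrict_var x s).

Inductive subhist (P : tx -> Prop) : history -> history -> Prop :=
| sh_nil : subhist P [] []
| sh_keep e s v : P (tid e) -> subhist P s v -> subhist P (e :: s) (e :: v)
| sh_drop e s v : ~ P (tid e) -> subhist P s v -> subhist P (e :: s) v.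

Definition vis (S : history) (i : tx) (V : history) : Prop :=
  subhist (fun j => j = i \/ (committed S j /\ prec S j i)) S V.

Definition legal_tx (S : history) (i : tx) : Prop :=
  exists V, vis S i V /\ legal V.

(* Hs plays the role of H(P,Pi): the histories producible by the program *)
Definition last_write_inv (Hs : history -> Prop) (H : history) (p : nat)
    (i : tx) (x : var) : Prop :=
  forall H', Hs H' -> prefix H H' ->
  forall q u, p < q -> nth_error H' q <> Some (EvInv i (InvWrite x u)).

Definition decided (Hs : history -> Prop) (H : history) (i : tx) (x : var) : Prop :=
  exists p q v, exec H p q i (InvWrite x v) RespOk /\ last_write_inv Hs H p i x.

Definition keepb (d : var -> bool) (o : Inv) : bool :=
  match o with
  | InvInit => true
  | InvRead x => d x
  | InvWrite x _ => d x
  | _ => false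
  end.

(* keep the operation executions (invocation+response) whose invocation
   satisfies keepb d; h is a per-transaction (alternating) subhistory *)
Fixpoint keep_ops (d : var -> bool) (h : history) : history :=
  match h with
  | EvInv k o :: EvResp k' r :: t =>
      (if keepb d o then [EvInv k o; EvResp k' r] else []) ++ keep_ops d t
  | _ :: t => keep_ops d t
  | [] => []
  end.

(* S ⇓C T_j, where d decides "T_j is decided on x in H" *)
Definition downC (d : var -> bool) (S : history) (j : tx) : history :=
  keep_ops d (proj S j) ++ [EvInv j InvTryC; EvResp j RespC].

(* the part of a last-use view of T_i contributed by T_j *)
Definition lu_part (Hs : history -> Prop) (H S : history) (i j : tx)
    (part : history) : Prop :=
  let full := (j = i \/ (committed S j /\ prec S j i)) in
  let opt := (~ committed S j /\ (exists x, decided Hs H j x) /\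
              prec S j i /\ ~ prec H j i) in
  (full /\ part = proj S j) \/
  (opt /\ (part = [] \/
           exists d : var -> bool,
             (forall x, d x = true <-> decided Hs H j x) /\
             part = downC d S j)) \/
  (~ full /\ ~ opt /\ part = []).

(* a last-use view of T_i in S (components placed in the order of S) *)
Definition lu_view (Hs : history -> Prop) (H S : history) (i : tx)
    (V : history) : Prop :=
  exists f : tx -> history,
    V = concat (map f (tids S)) /\
    forall j, In j (tids S) -> lu_part Hs H S i j (f j).

Definition lu_legal (Hs : history -> Prop) (H S : history) (i : tx) : Prop :=
  exists V, lu_view Hs H S i V /\ legal V.

Definition final_state_lu_opaque (Hs : history -> Prop) (H : history) : Prop :=
  exists C S, completion H C /\ equivalent S C /\ sequential S /\
    (forall j k, prec H j k -> prec S j k) /\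
    forall i, In i (tids S) ->
      (committed S i -> legal_tx S i) /\
      (~ committed S i -> lu_legal Hs H S i).

Definition lu_opaque (Hs : history -> Prop) (H : history) : Prop :=
  forall P, prefix P H -> final_state_lu_opaque Hs P.

Definition releases_early (H : history) (i : tx) (x : var) : Prop :=
  exists P, prefix P H /\ In i (tids P) /\ live P i /\
  exists j v pr qr pw qw rw,
    exec P pr qr j (InvRead x) (RespVal v) /\
    (forall k u, k < pr -> nth_error P k <> Some (EvInv j (InvWrite x u))) /\
    exec P pw qw i (InvWrite x v) rw /\ qw < pr.

(* Cut H just after the response of the read r_j(x) -> v and serialise that
   prefix P as last-use opacity allows.  Since v <> 0 and writes are unique,
   any legal view of T_j must contain the only write of v, namely w_i(x,v).
   But T_i is not committed in any completion of P, because it still invokes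
   w_i(x,v') later in H, and for the same reason it is not decided on x in P;
   so no view of T_j (full or last-use) may include w_i(x,v). *)
From Stdlib Require Import List Arith PeanoNat Lia Classical.
Import ListNotations.

Lemma proj_app H1 H2 i : proj (H1 ++ H2) i = proj H1 i ++ proj H2 i.
Proof. apply filter_app. Qed.

Lemma in_proj e H i : In e (proj H i) <-> In e H /\ tid e = i.
Proof. unfold proj; rewrite filter_In, Nat.eqb_eq; tauto. Qed.

Lemma proj_idem h j : proj (proj h j) j = proj h j.
Proof.
  unfold proj; induction h as [|a h IH]; simpl; auto.
  destruct (Nat.eqb (tid a) j) eqn:E; simpl; rewrite ?E, IH; reflexivity.
Qed.

Lemma proj_nil M i : (forall e, In e M -> tid e <> i) -> proj M i = [].
Proof.
  induction M as [|a M IH]; intros HM; simpl; auto.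
  destruct (Nat.eqb_spec (tid a) i) as [Ha|_]; [destruct (HM a (or_introl eq_refl) Ha)|].
  apply IH; intros e He; apply HM; right; exact He.
Qed.

Lemma in_tids e H : In e H -> In (tid e) (tids H).
Proof.
  induction H as [|a H IH]; simpl; [tauto|]. intros [<-|Hin]; auto.
  destruct (Nat.eq_dec (tid a) (tid e)); auto.
  right. apply in_in_remove; auto.
Qed.

Lemma prefix_in P H e : prefix P H -> In e P -> In e H.
Proof. intros [s ->] He; apply in_or_app; auto. Qed.

Lemma prec_irrefl S e : In e S -> ~ prec S (tid e) (tid e).
Proof.
  intros He [_ [_ Hlt]]. destruct (In_nth_error _ _ He) as [p Hp].
  specialize (Hlt p p _ _ Hp eq_refl Hp eq_refl). lia.
Qed.

Lemma equivalent_in S C e : equivalent S C -> In e S <-> In e C.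
Proof.
  intros Heq. pose proof (in_proj e S (tid e)) as HS.
  pose proof (in_proj e C (tid e)) as HC. rewrite Heq in HS. tauto.
Qed.

Lemma exec_firstn H n p q i o r :
  exec H p q i o r -> q < n -> exec (firstn n H) p q i o r.
Proof.
  intros [Hp [Hpq [Hq Hmid]]] Hqn.
  assert (Hfirst : forall k, k < n -> nth_error (firstn n H) k = nth_error H k).
  { intros k Hk; rewrite nth_error_firstn; destruct (Nat.ltb_spec k n); lia || reflexivity. }
  split; [rewrite Hfirst by lia; exact Hp|].
  split; [exact Hpq|].
  split; [rewrite Hfirst by lia; exact Hq|].
  intros k e Hk1 Hk2 Hk. rewrite Hfirst in Hk by lia. eauto.
Qed.

Lemma exec_proj H p q i o r : exec H p q i o r ->
  exists A B, proj H i = A ++ EvInv i o :: EvResp i r :: B.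
Proof.
  intros [Hp [Hpq [Hq Hmid]]].
  destruct (nth_error_split _ _ Hp) as [H1 [H2 [-> L1]]].
  rewrite nth_error_app2 in Hq by lia.
  destruct (q - length H1) as [|n] eqn:En; [lia|]. simpl in Hq.
  destruct (nth_error_split _ _ Hq) as [M [H3 [-> L2]]].
  assert (HM : proj M i = []).
  { apply proj_nil; intros e He. destruct (In_nth_error _ _ He) as [k Hk].
    assert (k < length M) by (apply nth_error_Some; congruence).
    apply (Hmid (length H1 + S k)); try lia.
    rewrite nth_error_app2, Nat.add_comm, Nat.add_sub by lia. simpl.
    rewrite nth_error_app1 by lia. exact Hk. }
  exists (proj H1 i), (proj H3 i).
  rewrite proj_app; simpl; rewrite Nat.eqb_refl, proj_app, HM; simpl.
  rewrite Nat.eqb_refl; reflexivity.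
Qed.

Lemma next_resp_proj i s : next_resp i s =
  match proj s i with EvResp _ r :: _ => Some r | _ => None end.
Proof.
  induction s as [|[k o|k r] s IH]; simpl; auto; destruct (Nat.eqb_spec k i); auto.
Qed.

Lemma op_execs_of_proj V j A o r B :
  proj V j = A ++ EvInv j o :: EvResp j r :: B -> In (o, Some r) (op_execs V).
Proof.
  revert A. induction V as [|e V IH]; intros A HV; [destruct A; discriminate|].
  unfold proj in HV; simpl in HV; fold (proj V j) in HV.
  destruct (Nat.eqb_spec (tid e) j).
  - destruct A as [|a A]; simpl in HV; injection HV as -> HV'.
    + left. rewrite next_resp_proj, HV'. reflexivity.
    + destruct a; simpl; [right|]; eapply IH; eauto.
  - destruct e; simpl; [right|]; eapply IH; eauto.
Qed.

Lemma op_execs_inv V o r : In (o, r) (op_execs V) -> exists k, In (EvInv k o) V.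
Proof.
  induction V as [|[k o'|k r'] V IH]; simpl; [tauto| |].
  - intros [Heq|Hin]; [injection Heq as -> _; eauto|].
    destruct (IH Hin) as [k' ?]; eauto.
  - intros Hin; destruct (IH Hin) as [k' ?]; eauto.
Qed.

Lemma seq_ok_read_written cur l z u :
  seq_ok cur l -> In (InvRead z, Some (RespVal u)) l ->
  u = cur \/ exists y, In (InvWrite y u, Some RespOk) l.
Proof.
  revert cur. induction l as [|[o r] l IH]; intros cur Hs Hr; [destruct Hr|].
  destruct Hr as [Heq|Hr].
  - injection Heq as -> ->. left. apply Hs.
  - assert (Hcur : exists cur', seq_ok cur' l /\
              (cur' = cur \/ exists y, (o, r) = (InvWrite y cur', Some RespOk))).
    { destruct o; destruct r as [[]|]; simpl in Hs;
        try destruct Hs as [_ Hs]; eauto. }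
    destruct Hcur as [cur' [Hs' Hcur']].
    destruct (IH _ Hs' Hr) as [->|[y' Hy']]; [|simpl; eauto].
    destruct Hcur' as [->|[y Hy]]; [auto|]. rewrite Hy; simpl; eauto.
Qed.

Lemma legal_read_written V x v :
  legal V -> In (InvRead x, Some (RespVal v)) (op_execs V) -> v <> 0 ->
  exists k, In (EvInv k (InvWrite x v)) V.
Proof.
  intros Hl Hr Hv0.
  assert (Hr' : In (InvRead x, Some (RespVal v)) (restrict_var x V)).
  { apply filter_In; simpl; rewrite Nat.eqb_refl; auto. }
  destruct (seq_ok_read_written _ _ _ _ (Hl x) Hr') as [->|[y Hw]]; [easy|].
  apply filter_In in Hw as [Hw Hy]; simpl in Hy; apply Nat.eqb_eq in Hy as ->.
  exact (op_execs_inv _ _ _ Hw).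
Qed.

Lemma wf_alt_terminal_last i h A k r B :
  wf_alt i h -> h = A ++ EvResp k r :: B -> terminal r -> B = [].
Proof.
  intros Hwf; revert A; induction Hwf; intros A E T;
    destruct A as [|a [|b A]]; simpl in E; try discriminate;
    injection E; intros; subst; try contradiction; eauto.
  destruct A; discriminate.
Qed.

Lemma wf_alt_tryC_last i h A k B :
  wf_alt i h -> h = A ++ EvInv k InvTryC :: B -> B = [] \/ exists r, B = [EvResp i r].
Proof.
  intros Hwf; revert A; induction Hwf; intros A E;
    destruct A as [|a [|b A]]; simpl in E; try discriminate;
    injection E; intros; subst; eauto.
  - exfalso; apply H0; destruct H as [Hr|Hr]; subst r; [right|left]; reflexivity.
  - destruct A; discriminate.
Qed.

Lemma well_formed_alt H i : well_formed H -> wf_alt i (proj H i).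
Proof. intros Hwf; destruct (Hwf i) as [->|(t & _ & W & _)]; [constructor | exact W]. Qed.

Lemma compl_suffix_inv k h e k' o :
  compl_suffix k h e -> In (EvInv k' o) e -> o = InvTryA.
Proof.
  unfold compl_suffix. intros C Hin.
  destruct (rev h) as [|[k1 o1|k1 [] ] t]; try destruct o1;
    repeat match goal with H : _ \/ _ |- _ => destruct H end; subst; simpl in Hin;
    intuition congruence.
Qed.

Lemma compl_suffix_commit k h e :
  compl_suffix k h e -> In (EvResp k RespC) e -> exists h' k', rev h = EvInv k' InvTryC :: h'.
Proof.
  unfold compl_suffix. intros C Hin.
  destruct (rev h) as [|[k1 o1|k1 [] ] t]; try destruct o1; eauto;
    repeat match goal with H : _ \/ _ |- _ => destruct H end; subst; simpl in Hin;
    intuition congruence.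
Qed.

Lemma completion_write_in P C k x u :
  completion P C -> In (EvInv k (InvWrite x u)) C -> In (EvInv k (InvWrite x u)) P.
Proof.
  intros [E [-> HE]] Hin. apply in_app_or in Hin as [Hin|Hin]; [exact Hin|].
  assert (Hk : In (EvInv k (InvWrite x u)) (proj E k)) by (apply in_proj; auto).
  discriminate (compl_suffix_inv _ _ _ _ _ (HE k) Hk).
Qed.

(* Well-formedness allows nothing after C_i, and a completion commits T_i only
   when tryC_i is its last invocation in P. *)
Lemma completion_committed_no_later_inv H P C i q o :
  well_formed H -> prefix P H -> completion P C -> committed C i ->
  nth_error H q = Some (EvInv i o) -> q < length P.
Proof.
  intros Hwf [R ->] [E [-> HE]] Hc Hq.
  destruct (Nat.lt_ge_cases q (length P)) as [|Hge]; [assumption|exfalso].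
  assert (HR : In (EvInv i o) (proj R i)).
  { apply in_proj; split; [|reflexivity].
    rewrite nth_error_app2 in Hq by exact Hge. eapply nth_error_In, Hq. }
  pose proof (well_formed_alt _ i Hwf) as Hw; rewrite proj_app in Hw.
  apply in_app_or in Hc as [Hc|Hc].
  - assert (Hc' : In (EvResp i RespC) (proj P i)) by (apply in_proj; auto).
    destruct (in_split _ _ Hc') as [A [B HAB]].
    rewrite HAB, <- app_assoc in Hw.
    pose proof (wf_alt_terminal_last _ _ _ _ _ _ Hw eq_refl (or_introl eq_refl)) as Hnil.
    apply app_eq_nil in Hnil as [_ Hnil]. rewrite Hnil in HR; destruct HR.
  - assert (Hc' : In (EvResp i RespC) (proj E i)) by (apply in_proj; auto).
    destruct (compl_suffix_commit _ _ _ (HE i) Hc') as [h' [k' Hr]].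
    rewrite <- (rev_involutive (proj P i)), Hr in Hw. simpl in Hw.
    rewrite <- app_assoc in Hw.
    destruct (wf_alt_tryC_last _ _ _ _ _ Hw eq_refl) as [Hnil|[r Hnil]];
      rewrite Hnil in HR; simpl in HR; intuition discriminate.
Qed.

Lemma decided_no_later_write Hs P H i x q u :
  decided Hs P i x -> Hs H -> prefix P H ->
  nth_error H q = Some (EvInv i (InvWrite x u)) -> q < length P.
Proof.
  intros (p & p' & w & [Hp _] & Hlast) HsH HPH Hq.
  assert (p < length P) by (apply nth_error_Some; congruence).
  destruct (Nat.lt_ge_cases q (length P)) as [|Hge]; [assumption|].
  exfalso; apply (Hlast H HsH HPH q u); [lia | exact Hq].
Qed.

Lemma unique_writes_writer H p i k x v :
  unique_writes H -> nth_error H p = Some (EvInv i (InvWrite x v)) ->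
  In (EvInv k (InvWrite x v)) H -> k = i.
Proof.
  intros [Huniq _] Hp Hk. destruct (In_nth_error _ _ Hk) as [q Hq].
  pose proof (Huniq _ _ _ _ _ _ Hq Hp) as ->. congruence.
Qed.

Lemma subhist_in Q S V e : subhist Q S V -> In e V -> In e S /\ Q (tid e).
Proof. induction 1; simpl; intuition (subst; auto). Qed.

Lemma subhist_proj Q S V j : subhist Q S V -> Q j -> proj V j = proj S j.
Proof.
  induction 1; intros Qj; unfold proj in *; simpl; auto.
  - rewrite IHsubhist; auto.
  - destruct (Nat.eqb_spec (tid e) j); [subst; contradiction | auto].
Qed.

Lemma keep_ops_inv d h k o :
  In (EvInv k o) (keep_ops d h) -> In (EvInv k o) h /\ keepb d o = true.
Proof.
  (* keep_ops consumes two events at a time, so h and a :: h are handled together. *)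
  pose (Good h := In (EvInv k o) (keep_ops d h) -> In (EvInv k o) h /\ keepb d o = true).
  enough (Hh : forall h, Good h /\ forall a, Good (a :: h)) by exact (proj1 (Hh h)).
  unfold Good.
  clear h; intros h; induction h as [|b h [IH IH']]; split.
  - simpl; tauto.
  - intros [] Hin; simpl in Hin; tauto.
  - exact (IH' b).
  - intros [k1 o1|k1 r1] Hin.
    + destruct b as [k2 o2|k2 r2].
      * change (In (EvInv k o) (keep_ops d (EvInv k2 o2 :: h))) in Hin.
        destruct (IH' _ Hin); simpl in *; tauto.
      * change (In (EvInv k o) ((if keepb d o1 then [EvInv k1 o1; EvResp k2 r2] else [])
                                 ++ keep_ops d h)) in Hin.
        apply in_app_or in Hin as [Hin|Hin]; [|destruct (IH Hin); simpl; tauto].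
        destruct (keepb d o1) eqn:Hk; simpl in Hin; [|tauto].
        destruct Hin as [Heq|[Heq|[]]]; [injection Heq as -> ->|discriminate]; simpl; auto.
    + change (In (EvInv k o) (keep_ops d (b :: h))) in Hin.
      destruct (IH' _ Hin); simpl in *; tauto.
Qed.

Lemma legal_tx_view S j :
  legal_tx S j -> exists V, legal V /\ proj V j = proj S j /\
    forall e, In e V -> In e S /\ (tid e = j \/ committed S (tid e)).
Proof.
  intros [V [Hvis Hl]]. exists V; split; [exact Hl|split].
  - eapply subhist_proj; [exact Hvis | left; reflexivity].
  - intros e He. destruct (subhist_in _ _ _ _ Hvis He) as [HS Hq]. intuition.
Qed.

Lemma lu_view_self Hs H S j V e :
  lu_view Hs H S j V -> In e S -> tid e = j ->
  exists X Y, proj V j = X ++ proj S j ++ Y.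
Proof.
  intros [f [-> Hf]] He <-.
  destruct (in_split _ _ (in_tids _ _ He)) as [l1 [l2 Hl]].
  exists (proj (concat (map f l1)) (tid e)), (proj (concat (map f l2)) (tid e)).
  rewrite Hl, map_app, concat_app, !proj_app; simpl; rewrite proj_app.
  destruct (Hf (tid e) (in_tids _ _ He)) as [[_ ->]|[[[_ [_ [Hp _]]] _]|[Hnf _]]].
  - rewrite proj_idem; reflexivity.
  - destruct (prec_irrefl _ _ He Hp).
  - destruct Hnf; auto.
Qed.

Lemma lu_view_write Hs H S j V k x u :
  lu_view Hs H S j V -> In (EvInv k (InvWrite x u)) V ->
  In (EvInv k (InvWrite x u)) S /\ (k = j \/ committed S k \/ decided Hs H k x).
Proof.
  intros [f [-> Hf]] Hin.
  apply in_concat in Hin as [l [Hl Hin]]. apply in_map_iff in Hl as [k' [<- Hk']].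
  destruct (Hf k' Hk') as [[Hfull Hp]|[[_ [Hp | [d [Hd Hp]]]]|[_ [_ Hp]]]];
    rewrite Hp in Hin; [| destruct Hin | | destruct Hin].
  - apply in_proj in Hin as [HS <-]. intuition.
  - apply in_app_or in Hin as [Hin|Hin]; [|simpl in Hin; intuition discriminate].
    destruct (keep_ops_inv _ _ _ _ Hin) as [Hin' Hdx].
    apply in_proj in Hin' as [HS <-]. split; [exact HS|].
    right; right. apply Hd, Hdx.
Qed.

Lemma final_state_exec_view Hs P j p q o r :
  final_state_lu_opaque Hs P -> exec P p q j o r ->
  exists C S V, completion P C /\ equivalent S C /\ legal V /\
    In (o, Some r) (op_execs V) /\
    forall k x u, In (EvInv k (InvWrite x u)) V ->
      In (EvInv k (InvWrite x u)) S /\ (k = j \/ committed S k \/ decided Hs P k x).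
Proof.
  intros (C & S & HC & HSC & _ & _ & Hall) Hexec.
  destruct (exec_proj _ _ _ _ _ _ Hexec) as [A [B HAB]].
  assert (HSj : proj S j = A ++ EvInv j o :: EvResp j r :: (B ++ proj (skipn (length P) C) j)).
  { destruct HC as [E [-> _]]. rewrite HSC, proj_app, skipn_app, skipn_all, Nat.sub_diag, HAB.
    simpl; rewrite <- app_assoc; reflexivity. }
  assert (HinS : In (EvInv j o) S).
  { apply (in_proj _ _ j). rewrite HSj. apply in_or_app; simpl; auto. }
  destruct (Hall j (in_tids _ _ HinS)) as [Hcomm Hncomm].
  destruct (classic (committed S j)) as [Hc|Hc].
  - destruct (legal_tx_view _ _ (Hcomm Hc)) as (V & Hl & HVj & HV).
    exists C, S, V; do 4 (split; [auto|]).
    + eapply op_execs_of_proj. rewrite HVj, HSj; reflexivity.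
    + intros k x u Hk. destruct (HV _ Hk) as [HS Hw]. intuition.
  - destruct (Hncomm Hc) as [V [Hview Hl]].
    destruct (lu_view_self _ _ _ _ _ _ Hview HinS eq_refl) as [X [Y HVj]].
    exists C, S, V; do 4 (split; [auto|]).
    + apply (op_execs_of_proj V j (X ++ A) o r (B ++ proj (skipn (length P) C) j ++ Y)).
      rewrite HVj, HSj, <- !app_assoc; simpl; rewrite <- app_assoc; reflexivity.
    + intros k x u Hk. exact (lu_view_write _ _ _ _ _ _ _ _ Hview Hk).
Qed.

Theorem mainTheorem6 :
  forall (Hs : history -> Prop) (H : history),
    Hs H -> well_formed H -> unique_writes H -> lu_opaque Hs H ->
    ~ exists (i j : tx) (x : var) (v v' : val) (p1 q1 p2 q2 pr qr : nat),
        i <> j /\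
        releases_early H i x /\
        exec H p1 q1 i (InvWrite x v) RespOk /\
        exec H p2 q2 i (InvWrite x v') RespOk /\ p1 < p2 /\
        exec H pr qr j (InvRead x) (RespVal v) /\ qr < p2.
Proof.
  intros Hs H HsH Hwf Huw Hop
    (i & j & x & v & v' & p1 & q1 & p2 & q2 & pr & qr & Hij & _ & Ew1 & Ew2 & _ & Er & Hqr).
  set (P := firstn (S qr) H).
  assert (HPH : prefix P H) by (exists (skipn (S qr) H); symmetry; apply firstn_skipn).
  assert (HlenP : length P = S qr).
  { apply firstn_length_le. destruct Er as (_ & _ & Hq & _).
    apply nth_error_Some; congruence. }
  pose proof (exec_firstn _ _ _ _ _ _ _ Er (le_n _)) as ErP.
  destruct (final_state_exec_view _ _ _ _ _ _ _ (Hop P HPH) ErP)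
    as (C & S & V & HC & HSC & Hl & Hread & Hwriters).
  destruct Ew1 as [Hw1 _], Ew2 as [Hw2 _].
  destruct (legal_read_written _ _ _ Hl Hread (proj2 Huw _ _ _ _ Hw1)) as [k Hk].
  destruct (Hwriters _ _ _ Hk) as [HkS Hwho].
  assert (k = i) as ->.
  { eapply unique_writes_writer; [exact Huw | exact Hw1 |].
    apply (prefix_in P H _ HPH), (completion_write_in P C _ _ _ HC).
    apply (equivalent_in _ _ _ HSC), HkS. }
  destruct Hwho as [Heq|[Hcomm|Hdec]]; [congruence| |].
  - apply (equivalent_in _ _ _ HSC) in Hcomm.
    pose proof (completion_committed_no_later_inv _ _ _ _ _ _ Hwf HPH HC Hcomm Hw2). lia.
  - pose proof (decided_no_later_write _ _ _ _ _ _ _ Hdec HsH HPH Hw2). lia.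
Qed.
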